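(* Any profinite minimal action $\Gamma\curvearrowright X$ of a countable group on a zero-dimensional compact metric space $X$ has comparison.
   Context: An action $\Gamma\curvearrowright X$ on a zero-dimensional compact metric space is profinite if the orbits of the induced action of $\Gamma$ on the set $\mathrm{Clo}(X)$ of clopen subsets of $X$ are all finite; it is minimal if every orbit in $X$ is dense. Let $\mathrm{Prob}_\Gamma(X)$ denote the set of $\Gamma$-invariant Borel probability measures on $X$. The action has comparison if for all nonempty clopen sets $A,B\subseteq X$ with $\mu(A)<\mu(B)$ for all $\mu\in\mathrm{Prob}_\Gamma(X)$, there exist a partition $A=\bigsqcup_{i=1}^n C_i$ into clopen sets and elements $\gamma_1,\dots,\gamma_n\in\Gamma$ such that the sets $\gamma_iC_i$ ($1\le i\le n$) are pairwise disjoint subsets of $B$. *)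

From HB Require Import structures.
From mathcomp Require Import all_boot all_order all_algebra.
From mathcomp Require Import all_classical all_reals all_analysis.
From mathcomp Require monoid.

Set Implicit Arguments.
Unset Strict Implicit.
Unset Printing Implicit Defensive.

Import Order.TTheory GRing.Theory Num.Theory.
Local Open Scope classical_set_scope.
Local Open Scope ring_scope.

Definition Borel (X : ptopologicalType) := g_sigma_algebraType (@open X).

Definition continuous_action (G : monoid.Group.Exports.groupType) (X : topologicalType)
  (a : G -> X -> X) : Prop :=
  [/\ (forall x, a monoid.one x = x),
      (forall g h x, a (monoid.mul g h) x = a g (a h x)) &
      (forall g, continuous (a g))].

Definition profinite_action (G : monoid.Group.Exports.groupType) (X : topologicalType)
  (a : G -> X -> X) : Prop :=
  forall A : set X, clopen A -> finite_set [set a g @` A | g in [set: G]].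

Definition minimal_action (G : monoid.Group.Exports.groupType) (X : topologicalType)
  (a : G -> X -> X) : Prop :=
  forall x : X, closure [set a g x | g in [set: G]] = [set: X].

Definition invariant_prob (R : realType) (G : monoid.Group.Exports.groupType)
  (X : ptopologicalType) (a : G -> X -> X) (mu : probability (Borel X) R) : Prop :=
  forall (g : G) (A : set (Borel X)), measurable A ->
    mu (a g @^-1` A) = mu A.

Definition has_comparison (R : realType) (G : monoid.Group.Exports.groupType)
  (X : ptopologicalType) (a : G -> X -> X) : Prop :=
  forall A B : set X, clopen A -> clopen B -> A !=set0 -> B !=set0 ->
    (forall mu : probability (Borel X) R, invariant_prob a mu ->
       (mu (A : set (Borel X)) < mu (B : set (Borel X)))%E) ->
    exists (n : nat) (C : 'I_n -> set X) (gam : 'I_n -> G),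
      [/\ (forall i, clopen (C i)),
          (forall i j, i != j -> C i `&` C j = set0),
          A = \bigcup_(i in [set: 'I_n]) C i,
          (forall i j, i != j -> a (gam i) @` C i `&` a (gam j) @` C j = set0) &
          (forall i, a (gam i) @` C i `<=` B)].

From HB Require Import structures.
From mathcomp Require Import all_boot all_order all_algebra.
From mathcomp Require Import all_classical all_reals all_analysis.
From mathcomp Require monoid.
From mathcomp Require Import finmap.

(* Fix a point x0 and give a clopen set C the proportion of the finitely many
   distinct translates of C that contain x0.  Averaging over the finite orbit
   of a pair (C, D) shows that this is additive on disjoint clopen sets; it is
   invariant, and by compactness sigma-additive on the algebra of clopen sets.
   The clopen sets of a compact metrizable zero-dimensional space generate its
   Borel sets, so it extends to an invariant Borel probability measure.

   Given A and B, the translates of A and B form a finite invariant family of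
   clopen sets.  Its atoms are finitely many clopen sets permuted by G, and
   transitively so by minimality.  Hence every invariant measure gives all
   atoms the same mass, mu(A) < mu(B) forces A to contain fewer atoms than B,
   and sending the atoms of A injectively onto atoms of B by group elements
   gives the required partition. *)

Set Implicit Arguments.
Unset Strict Implicit.
Unset Printing Implicit Defensive.

Import Order.TTheory GRing.Theory Num.Theory.
Local Open Scope classical_set_scope.
Local Open Scope ring_scope.

Definition group_action (G : monoid.Group.Exports.groupType) (T : Type)
  (act : G -> T -> T) : Prop :=
  (forall t, act monoid.one t = t) /\
  (forall g h t, act (monoid.mul g h) t = act g (act h t)).

Definition orbit_of (G : monoid.Group.Exports.groupType) (T : Type)
  (act : G -> T -> T) (t : T) : set T := [set act g t | g in [set: G]].

Definition set_act (G : monoid.Group.Exports.groupType) (X : Type)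
  (a : G -> X -> X) (g : G) (S : set X) : set X := a g @` S.

Section GroupAction.
Variables (G : monoid.Group.Exports.groupType) (T : Type) (act : G -> T -> T).
Hypothesis act_action : group_action act.

Lemma actK g : cancel (act g) (act (monoid.inv g)).
Proof. by case: act_action => act1 actM t; rewrite -actM monoid.mulVg act1. Qed.

Lemma actVK g : cancel (act (monoid.inv g)) (act g).
Proof. by case: act_action => act1 actM t; rewrite -actM monoid.mulgV act1. Qed.

Lemma orbit_of_refl t : orbit_of act t t.
Proof. by exists monoid.one => //; case: act_action. Qed.

Lemma orbit_of_act g t : orbit_of act (act g t) = orbit_of act t.
Proof.
case: act_action => _ actM.
apply/seteqP; split=> _ [h _ <-]; first by exists (monoid.mul h g); rewrite ?actM.
by exists (monoid.mul h (monoid.inv g)); rewrite // actM actK.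
Qed.

Lemma act_orbit_of_bij g t : set_bij (orbit_of act t) (orbit_of act t) (act g).
Proof.
case: act_action => _ actM; split.
- by move=> _ [h _ <-]; exists (monoid.mul g h); rewrite ?actM.
- by move=> u v _ _ /(can_inj (actK g)).
- move=> _ [h _ <-]; exists (act (monoid.mul (monoid.inv g) h) t).
    by exists (monoid.mul (monoid.inv g) h).
  by rewrite actM actVK.
Qed.

Lemma orbit_of_act_closed g t u : orbit_of act t u -> orbit_of act t (act g u).
Proof.
by case: act_action => _ actM [h _ <-]; exists (monoid.mul g h); rewrite ?actM.
Qed.

Lemma orbit_of_fixed t : (forall g, act g t = t) -> orbit_of act t = [set t].
Proof.
move=> tfix; apply/seteqP; split=> [_ [g _ <-]|_ ->]; first by rewrite /= tfix.
exact: orbit_of_refl.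
Qed.

End GroupAction.

Section SetAction.
Variables (G : monoid.Group.Exports.groupType) (X : Type) (a : G -> X -> X).
Hypothesis a_action : group_action a.

Lemma image_act_preimage g (S : set X) : a g @` S = a (monoid.inv g) @^-1` S.
Proof.
apply/seteqP; split=> [_ [y Sy <-]|y Sy]; first by rewrite /preimage /= actK.
by exists (a (monoid.inv g) y) => //; rewrite actVK.
Qed.

Lemma preimage_act_image g (S : set X) : a g @^-1` S = a (monoid.inv g) @` S.
Proof. by rewrite image_act_preimage monoid.invgK. Qed.

Lemma set_act_action : group_action (set_act a).
Proof.
case: a_action => a1 aM; split=> [S|g h S]; apply/seteqP; split.
- by move=> _ [x Sx <-]; rewrite a1.
- by move=> x Sx; exists x; rewrite ?a1.
- by move=> _ [x Sx <-]; exists (a h x); [exists x|rewrite aM].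
- by move=> _ [_ [x Sx <-] <-]; exists x; rewrite ?aM.
Qed.

Lemma image_actI g (S T : set X) : a g @` (S `&` T) = a g @` S `&` a g @` T.
Proof. by rewrite !image_act_preimage preimage_setI. Qed.

Lemma image_actU g (S T : set X) : a g @` (S `|` T) = a g @` S `|` a g @` T.
Proof. by rewrite !image_act_preimage preimage_setU. Qed.

Lemma orbit_of_setT : orbit_of (set_act a) [set: X] = [set [set: X]].
Proof.
by apply: (orbit_of_fixed set_act_action) => g; rewrite /set_act image_act_preimage.
Qed.

Lemma orbit_of_set0 : orbit_of (set_act a) set0 = [set set0].
Proof. by apply: (orbit_of_fixed set_act_action) => g; rewrite /set_act image_set0. Qed.

End SetAction.

Definition prod_act (G : monoid.Group.Exports.groupType) (T U : Type)
  (actT : G -> T -> T) (actU : G -> U -> U) (g : G) (p : T * U) : T * U :=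
  (actT g p.1, actU g p.2).

Lemma prod_act_action (G : monoid.Group.Exports.groupType) (T U : Type)
  (actT : G -> T -> T) (actU : G -> U -> U) :
  group_action actT -> group_action actU -> group_action (prod_act actT actU).
Proof.
case=> T1 TM [U1 UM]; split=> [[t u]|g h [t u]]; first by rewrite /prod_act T1 U1.
by rewrite /prod_act /= TM UM.
Qed.

Definition fsmean (R : numFieldType) (T : choiceType) (S : set T) (f : T -> R) : R :=
  (\sum_(t \in S) f t) / \sum_(t \in S) (1 : R).

Lemma fsmeanD (R : numFieldType) (T : choiceType) (S : set T) (f h : T -> R) :
  finite_set S -> fsmean S (f \+ h) = fsmean S f + fsmean S h.
Proof. by move=> finS; rewrite /fsmean fsbig_split // mulrDl. Qed.

Lemma fsum_fibers (R : idomainType) (T U : choiceType) (E : set T)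
  (pi : T -> U) (v : U -> R) : finite_set E ->
  \sum_(t \in E) v (pi t) =
  \sum_(u \in pi @` E) (\sum_(t \in E) ((pi t == u)%:R : R)) * v u.
Proof.
move=> finE.
transitivity (\sum_(t \in E) \sum_(u \in pi @` E) (pi t == u)%:R * v u).
  apply: eq_fsbigr => t /set_mem Et.
  rewrite (fsbigD1 (pi t)) /=; [|exact: finite_image|by exists t].
  rewrite eqxx mul1r fsbig1 ?addr0 // => u [_ /eqP].
  by rewrite eq_sym => /negbTE ->; rewrite mul0r.
rewrite exchange_fsbig //; last exact: finite_image.
by apply: eq_fsbigr => u _; rewrite mulr_fsuml.
Qed.

Section OrbitMean.
Variables (R : numFieldType) (G : monoid.Group.Exports.groupType) (T U : choiceType).
Variables (actT : G -> T -> T) (actU : G -> U -> U) (pi : T -> U).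
Hypotheses (actT_action : group_action actT) (actU_action : group_action actU).
Hypothesis pi_equivariant : forall g t, pi (actT g t) = actU g (pi t).

Lemma orbit_of_equivariant t : orbit_of actU (pi t) = pi @` orbit_of actT t.
Proof.
apply/seteqP; split=> [_ [g _ <-]|_ [_ [g _ <-] <-]].
  by exists (actT g t); [exists g|rewrite pi_equivariant].
by exists g => //; rewrite pi_equivariant.
Qed.

Lemma fiber_card_orbit t u : orbit_of actU (pi t) u ->
  \sum_(s \in orbit_of actT t) ((pi s == u)%:R : R) =
  \sum_(s \in orbit_of actT t) ((pi s == pi t)%:R : R).
Proof.
case=> g _ <-; rewrite (reindex_fsbig (actT g) (orbit_of actT t) (orbit_of actT t)).
  apply: eq_fsbigr => s _.
  by rewrite pi_equivariant (inj_eq (can_inj (actK actU_action g))).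
exact: act_orbit_of_bij.
Qed.

Lemma fsmean_orbit_equivariant t (w : U -> R) : finite_set (orbit_of actT t) ->
  fsmean (orbit_of actT t) (w \o pi) = fsmean (orbit_of actU (pi t)) w.
Proof.
move=> finE; set E := orbit_of actT t.
set f := \sum_(s \in E) ((pi s == pi t)%:R : R).
have fibers (v : U -> R) : \sum_(s \in E) v (pi s) = f * \sum_(u \in pi @` E) v u.
  rewrite fsum_fibers // mulr_fsumr; apply: eq_fsbigr => u /set_mem.
  by rewrite -orbit_of_equivariant => /fiber_card_orbit ->.
have f_gt0 : 0 < f.
  rewrite /f (fsbigD1 t) //=; last exact: orbit_of_refl.
  rewrite eqxx ltr_pwDl // fsumr_ge0 // => s _; exact: ler0n.
rewrite /fsmean orbit_of_equivariant (fibers w) (fibers (fun=> 1)).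
by rewrite -mulf_div divff ?mul1r ?gt_eqF.
Qed.

End OrbitMean.

Section OrbitFrequency.
Variables (R : numFieldType) (G : monoid.Group.Exports.groupType) (X : Type).
Variables (a : G -> X -> X) (x0 : X).
Hypothesis a_action : group_action a.

Definition orbit_freq (C : set X) : R :=
  fsmean (orbit_of (set_act a) C) (fun D => (x0 \in D)%:R).

Lemma orbit_freq_ge0 C : 0 <= orbit_freq C.
Proof. by apply: divr_ge0; apply: fsumr_ge0 => D _ //; exact: ler0n. Qed.

Lemma orbit_freq_image g C : orbit_freq (a g @` C) = orbit_freq C.
Proof. by rewrite /orbit_freq (orbit_of_act (set_act_action a_action) g). Qed.

Lemma orbit_freq_setT : orbit_freq [set: X] = 1.
Proof. by rewrite /orbit_freq /fsmean orbit_of_setT // !fsbig_set1 in_setT divr1. Qed.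

Lemma orbit_freq_set0 : orbit_freq set0 = 0.
Proof. by rewrite /orbit_freq /fsmean orbit_of_set0 // !fsbig_set1 in_set0 mul0r. Qed.

(* The orbit of the pair (C, D) maps equivariantly onto the orbits of C, D
   and C `|` D, so all three frequencies are means over that one orbit. *)
Lemma orbit_freq_setU C D :
  finite_set (orbit_of (set_act a) C) -> finite_set (orbit_of (set_act a) D) ->
  C `&` D = set0 -> orbit_freq (C `|` D) = orbit_freq C + orbit_freq D.
Proof.
move=> finC finD CD0.
have pair_action := prod_act_action (set_act_action a_action) (set_act_action a_action).
set E := orbit_of (prod_act (set_act a) (set_act a)) (C, D).
have finE : finite_set E.
  apply: sub_finite_set (finite_setX finC finD) => _ [g _ <-].
  by split; exists g.
have mean_proj (pi : set X * set X -> set X) :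
    (forall g p, pi (prod_act (set_act a) (set_act a) g p) = a g @` pi p) ->
    fsmean E (fun p => (x0 \in pi p)%:R) = orbit_freq (pi (C, D)).
  move=> pi_equi.
  exact: (fsmean_orbit_equivariant pair_action (set_act_action a_action) pi_equi).
rewrite -(mean_proj fst) // -(mean_proj snd) // -fsmeanD //.
rewrite -(mean_proj (fun p => p.1 `|` p.2)); last by move=> g p; rewrite image_actU.
rewrite /fsmean; congr (_ / _); apply: eq_fsbigr => _ /set_mem [g _ <-].
have : a g @` C `&` a g @` D = set0 by rewrite -image_actI // CD0 image_set0.
rewrite /= /set_act in_setU => gCgD0.
case: (boolP (x0 \in _)) => [/set_mem xC|_]; last by rewrite add0r.
case: (boolP (x0 \in _)) => [/set_mem xD|_]; last by rewrite addr0.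
by have : set0 x0 by rewrite -gCgD0.
Qed.

End OrbitFrequency.

Lemma compact_trivIset_open_eventually_set0 (X : ptopologicalType) (F : nat -> set X) :
  compact (\bigcup_n F n) -> (forall n, open (F n)) -> trivIset [set: nat] F ->
  exists N, forall n, (N <= n)%N -> F n = set0.
Proof.
rewrite compact_cover => /(_ nat setT F) + oF tF.
case=> [n _|x [n _ Fnx]|D _ cover]; [exact: oF|by exists n|].
exists (\max_(i <- D) i).+1 => n Nn.
apply/seteqP; split=> // x Fnx.
have [m /= Dm Fmx] := cover x (ex_intro2 _ _ n I Fnx).
have nm := tF n m I I (ex_intro _ x (conj Fnx Fmx)).
by move: Nn; rewrite nm ltnNge (leq_bigmax_seq (F := id) _ Dm).
Qed.

Lemma bigsetU_nat_setI_trivIset (X : Type) (F : nat -> set X) N :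
  trivIset [set: nat] F -> (\big[setU/set0]_(0 <= i < N) F i) `&` F N = set0.
Proof.
move=> tF; rewrite big_mkord -bigcup_mkord setI_bigcupl.
apply/seteqP; split=> // x [i /= iN [Fix FNx]].
have iNE := tF i N I I (ex_intro _ x (conj Fix FNx)).
by move: iN; rewrite iNE /= ltnn.
Qed.

Lemma clopen_bigsetU_nat (X : topologicalType) (F : nat -> set X) N :
  (forall i, clopen (F i)) -> clopen (\big[setU/set0]_(0 <= i < N) F i).
Proof.
move=> cF; apply: (big_ind (@clopen X)) => //; first exact: clopen0.
by move=> ? ? ? ?; apply: clopenU.
Qed.

Section OrbitFrequencySigmaAdditive.
Variables (R : realType) (G : monoid.Group.Exports.groupType) (X : ptopologicalType).
Variables (a : G -> X -> X) (x0 : X).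
Hypotheses (a_cont : continuous_action a) (a_prof : profinite_action a).
Hypothesis X_compact : compact [set: X].

Local Notation nu := (orbit_freq R a x0).

Let a_action : group_action a.
Proof. by case: a_cont. Qed.

Lemma orbit_freq_bigsetU (F : nat -> set X) N :
  (forall i, clopen (F i)) -> trivIset [set: nat] F ->
  nu (\big[setU/set0]_(0 <= i < N) F i) = \sum_(0 <= i < N) nu (F i).
Proof.
move=> cF tF; elim: N => [|N IH]; first by rewrite !big_nil orbit_freq_set0.
rewrite !big_nat_recr //= (orbit_freq_setU _ _ a_action) ?IH //.
- by apply: a_prof; apply: clopen_bigsetU_nat.
- exact: a_prof.
- exact: bigsetU_nat_setI_trivIset.
Qed.

(* By compactness only finitely many of the pieces are nonempty. *)
Lemma orbit_freq_sigma_additive (F : nat -> set X) :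
  (forall i, clopen (F i)) -> trivIset [set: nat] F -> clopen (\bigcup_n F n) ->
  ((fun n => \sum_(0 <= i < n) (nu (F i))%:E) @ \oo --> (nu (\bigcup_n F n))%:E)%E.
Proof.
move=> cF tF [_ cU].
have [N FN0] : exists N, forall n, (N <= n)%N -> F n = set0.
  apply: compact_trivIset_open_eventually_set0 => // [|n]; last by case: (cF n).
  exact: subclosed_compact X_compact _.
have UE : \bigcup_n F n = \big[setU/set0]_(0 <= i < N) F i.
  rewrite big_mkord -bigcup_mkord; apply/seteqP; split=> [x [n _ Fnx]|x [n _ Fnx]].
    by exists n => //=; rewrite ltnNge; apply: contraPN Fnx => /FN0 ->.
  by exists n.
apply: cvg_near_cst; near=> n.
have Nn : (N <= n)%N by near: n; exact: nbhs_infty_ge.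
rewrite (big_cat_nat (leq0n N) Nn) /= [X in (_ + X)%E]big_nat_cond.
rewrite [X in (_ + X)%E]big1 ?adde0; last first.
  by move=> i /andP[/andP[Ni _] _]; rewrite FN0 // orbit_freq_set0.
by rewrite sumEFin UE orbit_freq_bigsetU.
Unshelve. all: by end_near.
Qed.

End OrbitFrequencySigmaAdditive.

Lemma clopen_preimage_act (G : monoid.Group.Exports.groupType) (X : topologicalType)
  (a : G -> X -> X) g (S : set X) :
  continuous_action a -> clopen S -> clopen (a g @^-1` S).
Proof.
case=> _ _ a_cont [oS cS].
by split; [apply: open_comp|apply: preimage_closed] => // x _; apply: a_cont.
Qed.

Lemma clopen_image_act (G : monoid.Group.Exports.groupType) (X : topologicalType)
  (a : G -> X -> X) g (S : set X) :
  continuous_action a -> clopen S -> clopen (a g @` S).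
Proof.
move=> a_cont; rewrite image_act_preimage; last by case: a_cont.
exact: clopen_preimage_act.
Qed.

Lemma sigma_open_sub_sigma_clopen (R : realType) (X : pseudoPMetricType R) :
  hausdorff_space X -> compact [set: X] -> zero_dimensional X ->
  <<s @open X >> `<=` <<s @clopen X >>.
Proof.
move=> X_haus X_compact X_zd; apply: smallest_sub; first exact: smallest_sigma_algebra.
move=> U oU; have [f] := clopen_surj X_compact.
pose h n := if `[< f n `<=` U >] then f n else set0.
have -> : U = \bigcup_n h n.
  apply/seteqP; split=> [x Ux|x [n _]]; last by rewrite /h; case: asboolP => // fU /fU.
  have [D [Dx cD] DU] := zero_dimensional_cvg X_haus X_zd X_compact
    (open_nbhs_nbhs (conj oU Ux)).
  have [n _ fnD] := @surj _ _ _ _ f D cD.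
  by exists n => //; rewrite /h fnD; case: asboolP => // -[].
apply: sigma_algebra_bigcup => n; rewrite /h; case: asboolP => _.
  by apply: sub_sigma_algebra; apply: funS.
exact: sigma_algebra0.
Qed.

Lemma mu_ext_preimage_bij d (R : realType) (T : semiRingOfSetsType d)
  (mu : set T -> \bar R) (f h : T -> T) :
  cancel f h -> cancel h f ->
  (forall S, measurable S -> measurable (f @^-1` S)) ->
  (forall S, measurable S -> measurable (h @^-1` S)) ->
  (forall S, measurable S -> mu (f @^-1` S) = mu S) ->
  forall A, mu_ext mu (f @^-1` A) = mu_ext mu A.
Proof.
move=> fK hK mf mh muf A; rewrite /mu_ext; congr ereal_inf.
have fhS S : f @^-1` (h @^-1` S) = S by apply/seteqP; split=> x; rewrite /preimage /= fK.
apply/seteqP; split=> _ [F [mF cF] <-].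
- exists (fun k => h @^-1` F k).
    rewrite /measurable_cover /=; split=> [k|y Ay]; first exact: mh.
    have /cF [k _ Fk] : (f @^-1` A) (h y) by rewrite /preimage /= hK.
    by exists k.
  by apply: eq_eseriesr => k _; rewrite -muf ?fhS //; exact: mh.
- exists (fun k => f @^-1` F k); last by apply: eq_eseriesr => k _; rewrite muf.
  by rewrite /measurable_cover /=; split=> [k|x /cF [k _ Fk]]; [exact: mf|exists k].
Qed.

Definition clopen_algebra (X : ptopologicalType) : Type := X.
HB.instance Definition _ (X : ptopologicalType) := Pointed.on (clopen_algebra X).
HB.instance Definition _ (X : ptopologicalType) :=
  @isAlgebraOfSets.Build default_measure_display (clopen_algebra X)
    (@clopen X) clopen0 (@clopenU X) (fun A => @clopenC X A A).

Section InvariantMeasure.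
Variables (R : realType) (G : monoid.Group.Exports.groupType) (X : pseudoPMetricType R).
Variable a : G -> X -> X.
Hypotheses (a_cont : continuous_action a) (a_prof : profinite_action a).
Hypotheses (X_haus : hausdorff_space X) (X_compact : compact [set: X]).
Hypothesis X_zd : zero_dimensional X.

Let a_action : group_action a.
Proof. by case: a_cont. Qed.

Definition orbit_freq_content (S : set (clopen_algebra X)) : \bar R :=
  (orbit_freq R a point S)%:E.

Let freq_content0 : orbit_freq_content set0 = 0%E.
Proof. by rewrite /orbit_freq_content orbit_freq_set0. Qed.

Let freq_content_ge0 S : (0 <= orbit_freq_content S)%E.
Proof. by rewrite lee_fin orbit_freq_ge0. Qed.

Let freq_content_sigma_additive : semi_sigma_additive orbit_freq_content.
Proof. by move=> F mF tF mU; apply: orbit_freq_sigma_additive. Qed.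

HB.instance Definition _ := isMeasure.Build _ (clopen_algebra X) R
  orbit_freq_content freq_content0 freq_content_ge0
  freq_content_sigma_additive.

Definition orbit_freq_measure (S : set (Borel X)) : \bar R :=
  measure_extension orbit_freq_content S.

Let measurable_sigma_clopen (S : set (Borel X)) : measurable S ->
  (@measurable _ (clopen_algebra X)).-sigma.-measurable S.
Proof. exact: sigma_open_sub_sigma_clopen. Qed.

Let freq_measure0 : orbit_freq_measure set0 = 0%E.
Proof. exact: measure0. Qed.

Let freq_measure_ge0 S : (0 <= orbit_freq_measure S)%E.
Proof. exact: measure_ge0. Qed.

Let freq_measure_sigma_additive : semi_sigma_additive orbit_freq_measure.
Proof.
move=> F mF tF mU; apply: measure_semi_sigma_additive => //.
- by move=> i; apply: measurable_sigma_clopen.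
- exact: measurable_sigma_clopen.
Qed.

HB.instance Definition _ := isMeasure.Build _ (Borel X) R
  orbit_freq_measure freq_measure0 freq_measure_ge0
  freq_measure_sigma_additive.

Let freq_measure_setT : orbit_freq_measure setT = 1%E.
Proof.
rewrite /orbit_freq_measure /measure_extension measurable_mu_extE; last exact: clopenT.
by congr EFin; exact: orbit_freq_setT.
Qed.

HB.instance Definition _ := Measure_isProbability.Build _ (Borel X) R
  orbit_freq_measure freq_measure_setT.

Lemma orbit_freq_measure_invariant : invariant_prob a orbit_freq_measure.
Proof.
move=> g S _; rewrite /orbit_freq_measure /measure_extension.
apply: (@mu_ext_preimage_bij _ _ (clopen_algebra X) _ _ _
  (actK a_action g) (actVK a_action g)).
- by move=> C; apply: clopen_preimage_act.
- by move=> C; apply: clopen_preimage_act.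
move=> C _; congr EFin; rewrite (preimage_act_image a_action).
exact: orbit_freq_image.
Qed.

Lemma exists_invariant_prob : exists mu : probability (Borel X) R, invariant_prob a mu.
Proof. by exists orbit_freq_measure; exact: orbit_freq_measure_invariant. Qed.

End InvariantMeasure.

Section Atoms.
Variables (X : ptopologicalType) (F : set (set X)).
Hypotheses (F_finite : finite_set F) (F_clopen : forall S, F S -> clopen S).

Definition atom (x : X) : set X := [set y | forall S, F S -> (S x <-> S y)].

Definition atoms : set (set X) := range atom.

Definition atoms_in (S : set X) : set (set X) := [set P | atoms P /\ P `<=` S].

Lemma atom_refl x : atom x x.
Proof. by []. Qed.

Lemma eq_atom x y : atom x y -> atom y = atom x.
Proof.
move=> xy; apply/seteqP; split=> z xz S FS; first by rewrite (xy S FS); exact: xz.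
by rewrite -(xy S FS); exact: xz.
Qed.

Lemma atom_sub x S : F S -> S x -> atom x `<=` S.
Proof. by move=> FS Sx y /(_ S FS) /iffLR; apply. Qed.

Lemma meet_atom_eq x y : atom x `&` atom y !=set0 -> atom x = atom y.
Proof. by case=> z [/eq_atom <- /eq_atom <-]. Qed.

Lemma atom_clopen x : clopen (atom x).
Proof.
have -> : atom x = \bigcap_(S in F) [set y | S x <-> S y].
  by apply/seteqP; split=> y xy S FS; apply: xy.
rewrite -bigsetI_fset_set // big_seq.
apply: (big_ind (@clopen X)); [exact: clopenT|by move=> ? ? ? ?; apply: clopenI|].
move=> S; rewrite (in_fset_set F_finite) => /set_mem FS.
have [Sx|nSx] := pselect (S x).
  have -> : [set y | S x <-> S y] = S.
    by apply/seteqP; split=> y; [move=> [/(_ Sx)]|move=> Sy; split].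
  exact: F_clopen.
have -> : [set y | S x <-> S y] = ~` S.
  by apply/seteqP; split=> y; [move=> [_ h] /h|move=> nSy; split].
exact: (@clopenC X S S (F_clopen FS)).
Qed.

Lemma atoms_clopen P : atoms P -> clopen P.
Proof. by case=> x _ <-; exact: atom_clopen. Qed.

Lemma atoms_finite : compact [set: X] -> finite_set atoms.
Proof.
rewrite compact_cover => /(_ X setT atom) [].
- by move=> x _; case: (atom_clopen x).
- by move=> x _; exists x.
move=> D _ cover.
apply: (sub_finite_set _ (finite_image atom (finite_fset D))) => _ [x _ <-].
by have [y /= Dy /eq_atom ->] := cover x I; exists y.
Qed.

Lemma bigcup_atoms_in S : F S -> S = \bigcup_(P in atoms_in S) P.
Proof.
move=> FS; apply/seteqP; split=> [x Sx|x [P [_ PS] Px]]; last exact: PS.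
by exists (atom x) => //; split; [exists x|exact: atom_sub].
Qed.

Lemma nth_atoms_disjoint (s : seq (set X)) i j : uniq s -> {subset s <= atoms} ->
  (i < size s)%N -> (j < size s)%N -> i != j ->
  nth set0 s i `&` nth set0 s j = set0.
Proof.
move=> s_uniq s_atoms ilt jlt ij; apply/seteqP; split=> // z sz.
have /set_mem [x _ xE] := s_atoms _ (mem_nth set0 ilt).
have /set_mem [y _ yE] := s_atoms _ (mem_nth set0 jlt).
have : nth set0 s i = nth set0 s j.
  by rewrite -xE -yE; apply: meet_atom_eq; exists z; rewrite xE yE.
by move/eqP; rewrite nth_uniq // (negbTE ij).
Qed.

Variables (G : monoid.Group.Exports.groupType) (a : G -> X -> X).
Hypotheses (a_action : group_action a) (F_invariant : forall g S, F S -> F (a g @` S)).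

Lemma image_act_atom g x : a g @` atom x = atom (a g x).
Proof.
apply/seteqP; split=> [_ [y xy <-] S FS|z xz].
  have := xy _ (F_invariant (monoid.inv g) FS).
  by rewrite !image_act_preimage // monoid.invgK.
exists (a (monoid.inv g) z); last exact: actVK.
move=> S FS; have := xz _ (F_invariant g FS).
by rewrite !image_act_preimage // /preimage /= actK.
Qed.

(* An atom is an open neighbourhood, so it meets every dense orbit. *)
Lemma atoms_transitive : minimal_action a ->
  forall P Q, atoms P -> atoms Q -> exists g, a g @` P = Q.
Proof.
move=> a_min _ _ [x _ <-] [y _ <-].
have : closure (orbit_of a x) y by rewrite a_min.
rewrite closureEnbhs => /(_ (orbit_of a x) (atom y)) [] //.
  by apply: open_nbhs_nbhs; split; [case: (atom_clopen y)|exact: atom_refl].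
by move=> _ [[g _ <-] /eq_atom gxy]; exists g; rewrite image_act_atom gxy.
Qed.

End Atoms.

Definition dynamically_subequivalent (G : monoid.Group.Exports.groupType)
  (X : topologicalType) (a : G -> X -> X) (A B : set X) : Prop :=
  exists (n : nat) (C : 'I_n -> set X) (gam : 'I_n -> G),
    [/\ (forall i, clopen (C i)),
        (forall i j, i != j -> C i `&` C j = set0),
        A = \bigcup_(i in [set: 'I_n]) C i,
        (forall i j, i != j -> a (gam i) @` C i `&` a (gam j) @` C j = set0) &
        (forall i, a (gam i) @` C i `<=` B)].

Section AtomCounting.
Variables (R : realType) (G : monoid.Group.Exports.groupType) (X : ptopologicalType).
Variables (a : G -> X -> X) (F : set (set X)).
Hypotheses (F_finite : finite_set F) (F_clopen : forall S, F S -> clopen S).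
Hypotheses (a_action : group_action a) (F_invariant : forall g S, F S -> F (a g @` S)).
Hypotheses (X_compact : compact [set: X]) (a_min : minimal_action a).

Let atoms_in_finite S : finite_set (atoms_in F S).
Proof. by apply: sub_finite_set (atoms_finite F_finite F_clopen X_compact) => P []. Qed.

Lemma invariant_measure_atoms_in (mu : probability (Borel X) R) x S :
  invariant_prob a mu -> F S -> mu S = (\sum_(P \in atoms_in F S) mu (atom F x))%E.
Proof.
move=> mu_inv FS.
have atoms_measurable P : atoms F P -> measurable (P : set (Borel X)).
  by move=> /(atoms_clopen F_finite F_clopen) [oP _]; apply: sub_sigma_algebra.
rewrite {1}(bigcup_atoms_in FS) -fsbig_setU // measure_fsbig //.
- apply: eq_fsbigr => P /set_mem [FP _].
  have [g <-] := atoms_transitive F_finite F_clopen a_action F_invariant a_min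
    (ex_intro2 _ _ x I erefl) FP.
  rewrite image_act_preimage //; apply: mu_inv; apply: atoms_measurable.
  by exists x.
- by move=> P [/atoms_measurable].
- move=> _ _ [[y _ <-] _] [[z _ <-] _]; exact: meet_atom_eq.
Qed.

Lemma invariant_measure_lt_card (mu : probability (Borel X) R) A B :
  invariant_prob a mu -> F A -> F B -> (mu A < mu B)%E ->
  (#|` fset_set (atoms_in F A)| < #|` fset_set (atoms_in F B)|)%N.
Proof.
move=> mu_inv FA FB; set c := fine (mu (atom F point)).
have c_ge0 : 0 <= c by apply/fine_ge0/measure_ge0.
have muE S : F S -> mu S = (c *+ #|` fset_set (atoms_in F S)|)%:E.
  move=> FS; rewrite (invariant_measure_atoms_in point mu_inv FS) fsbig_finite //.
  rewrite -[mu (atom F point)]fineK ?fin_num_measure //; last first.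
    by case: (atom_clopen F_finite F_clopen point) => oP _; apply: sub_sigma_algebra.
  by rewrite sumEFin big_const_seq count_predT iter_addr_0.
rewrite (muE _ FA) (muE _ FB) lte_fin; apply: contraTT; rewrite -!leqNgt -leNgt.
exact: ler_wpMn2l.
Qed.

Lemma atoms_in_subequivalent A B : F A ->
  (#|` fset_set (atoms_in F A)| <= #|` fset_set (atoms_in F B)|)%N ->
  dynamically_subequivalent a A B.
Proof.
set sA := fset_set (atoms_in F A); set sB := fset_set (atoms_in F B) => FA le_AB.
have nth_atoms_in S (s := fset_set (atoms_in F S)) i :
    (i < size s)%N -> atoms_in F S (nth set0 s i).
  by move=> /(mem_nth set0); rewrite (in_fset_set (atoms_in_finite S)) => /set_mem.
have sub_atoms S : {subset fset_set (atoms_in F S) <= atoms F}.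
  by move=> P; rewrite (in_fset_set (atoms_in_finite S)) => /set_mem [? _]; apply/mem_set.
have ltB (i : 'I_(size sA)) : (i < size sB)%N := leq_trans (ltn_ord i) le_AB.
have matching (i : 'I_(size sA)) : exists g, a g @` nth set0 sA i = nth set0 sB i.
  exact: (atoms_transitive F_finite F_clopen a_action F_invariant a_min
    (nth_atoms_in A i (ltn_ord i)).1 (nth_atoms_in B i (ltB i)).1).
have [gam gamE] := choice matching.
exists (size sA), (fun i => nth set0 sA i), gam; split.
- move=> i; apply: (atoms_clopen F_finite F_clopen).
  by case: (nth_atoms_in A i (ltn_ord i)).
- move=> i j ij.
  exact: nth_atoms_disjoint (fset_uniq _) (sub_atoms A) (ltn_ord i) (ltn_ord j) ij.
- rewrite {1}(bigcup_atoms_in FA); apply/seteqP; split=> [x [P AP Px]|x [i _ Pix]].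
    have PsA : (index P sA < size sA)%N.
      by rewrite index_mem (in_fset_set (atoms_in_finite A)); apply/mem_set.
    by exists (Ordinal PsA) => //=; rewrite nth_index // -index_mem.
  by exists (nth set0 sA i) => //; exact: nth_atoms_in.
- move=> i j ij; rewrite !gamE.
  exact: nth_atoms_disjoint (fset_uniq _) (sub_atoms B) (ltB i) (ltB j) ij.
- by move=> i; rewrite gamE; case: (nth_atoms_in B i (ltB i)).
Qed.

End AtomCounting.

Theorem lemma2p4 (R : realType) (G : monoid.Group.Exports.groupType) (X : pseudoPMetricType R)
  (a : G -> X -> X) :
  countable [set: G] ->
  hausdorff_space X -> compact [set: X] -> zero_dimensional X ->
  continuous_action a -> profinite_action a -> minimal_action a ->
  has_comparison R a.
Proof.
move=> _ X_haus X_compact X_zd a_cont a_prof a_min A B cA cB _ _ mu_lt.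
have a_action : group_action a by case: a_cont.
have [mu mu_inv] := exists_invariant_prob a_cont a_prof X_haus X_compact X_zd.
pose F := orbit_of (set_act a) A `|` orbit_of (set_act a) B.
have F_finite : finite_set F by rewrite finite_setU; split; apply: a_prof.
have F_clopen S : F S -> clopen S by case=> -[g _ <-]; apply: clopen_image_act.
have F_invariant g S : F S -> F (a g @` S).
  by case=> ?; [left|right]; apply: (orbit_of_act_closed (set_act_action a_action)).
have FA : F A by left; apply: orbit_of_refl (set_act_action a_action) _.
have FB : F B by right; apply: orbit_of_refl (set_act_action a_action) _.
have card_lt := invariant_measure_lt_card F_finite F_clopen a_action F_invariant
  X_compact a_min mu_inv FA FB (mu_lt _ mu_inv).
exact: (atoms_in_subequivalent F_finite F_clopen a_action F_invariant X_compact a_min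
  FA (ltnW card_lt)).
Qed.
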